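(* (i) For integers $p\geq 0$, $k\geq p+1$ and $n\geq 2k-p+2$, $q(M_{n,n-1}^{n-k-1,k-p})>q(M_{n,n-1}^{k-p,n-k-1})$. (ii) For integers $p\geq 0$, $k\geq p+2$ and $n\geq 2k-p+2$, $q(M_{n,n-1}^{n-k,k-p-1})>q(M_{n,n-1}^{n-k-1,k-p})$.
   Context: $q$ denotes the largest eigenvalue of $D+A$ (diagonal degree matrix plus adjacency matrix). $M_{n,m}^{s,t}$: bipartite graph with parts $X=X_1\cup X_2$, $Y=Y_1\cup Y_2$, $|X_1|=s$, $|X_2|=n-s$, $|Y_1|=m-t$, $|Y_2|=t$; edges are all pairs between $X_1$ and $Y_1$, between $X_2$ and $Y_1$, and between $X_2$ and $Y_2$. *)

From mathcomp Require Import all_boot all_order all_algebra.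
From mathcomp Require Import classical_sets reals.
Unset Printing Implicit Defensive.
Import Order.TTheory GRing.Theory Num.Theory.
Local Open Scope ring_scope.

(* Vertices of M_{n,m}^{s,t} are 'I_(n+m): index i < n is x_i in X
   (X1 = {x_i | i < s}, X2 = {x_i | s <= i < n});
   index n + j (j < m) is y_j in Y (Y1 = {y_j | j < m - t}, Y2 = {y_j | j >= m - t}). *)

(* adjacency between x_i (i < n) and y_j (j < m):
   X1-Y1, X2-Y1, X2-Y2, i.e. y_j in Y1 or x_i in X2. *)
Definition M_adjXY (s t m : nat) (i j : nat) : bool :=
  (j < m - t)%N || (s <= i)%N.

Definition M_adj (n m s t : nat) (u v : 'I_(n + m)) : bool :=
  [&& (u < n)%N, (n <= v)%N & M_adjXY s t m u (v - n)] ||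
  [&& (v < n)%N, (n <= u)%N & M_adjXY s t m v (u - n)].

Definition M_A (R : realType) (n m s t : nat) : 'M[R]_(n + m) :=
  \matrix_(u, v) (@M_adj n m s t u v)%:R.

Definition M_D (R : realType) (n m s t : nat) : 'M[R]_(n + m) :=
  diag_mx (\row_u (\sum_v (M_A R n m s t) u v)).

Definition M_Q (R : realType) (n m s t : nat) : 'M[R]_(n + m) :=
  M_D R n m s t + M_A R n m s t.

(* largest eigenvalue of a square real matrix (a finite nonempty set for
   symmetric matrices, so the supremum is the maximum) *)
Definition largest_eigenvalue (R : realType) (k : nat) (A : 'M[R]_k) : R :=
  sup [set l : R | eigenvalue A l].

Definition qM (R : realType) (n m s t : nat) : R :=
  @largest_eigenvalue R (n + m) (M_Q R n m s t).

From mathcomp Require Import all_boot all_order all_algebra.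
From mathcomp Require Import classical_sets reals.
From mathcomp Require Import ring lra zify.
Import Order.TTheory GRing.Theory Num.Theory.
Set Implicit Arguments.
Unset Strict Implicit.
Local Open Scope ring_scope.

(* The partition {X1, X2, Y1, Y2} of M_{n,n-1}^{s,t} is equitable, so each root
   x > n of the characteristic polynomial [charq] of its 4x4 quotient matrix is
   an eigenvalue of Q = D + A, with a left eigenvector constant on the parts.
   The largest root lies in (n, 2n - 1), where that eigenvector is positive;
   as Q is entrywise nonnegative, a positive eigenvector belongs to the largest
   eigenvalue, so q is this root.  Hence q(G1) < q(G2) as soon as [charq] of G2
   is negative at q(G1), since it is positive at 2n - 1.  For both pairs in the
   statement the difference of the two polynomials is explicit and has the
   right sign on (n, 2n - 1). *)

Lemma sum_nat_const_on (V : nmodType) a b (F : nat -> V) x :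
  (forall i, (a <= i < b)%N -> F i = x) -> \sum_(a <= i < b) F i = x *+ (b - a).
Proof. by move=> Fx; rewrite (eq_big_nat _ _ Fx) sumr_const_nat. Qed.

Section Parts.
Variables n m s t : nat.

Definition partwise {T : Type} (a b c d : T) (i : nat) : T :=
  if (i < n)%N then (if (i < s)%N then a else b)
  else if (i - n < m - t)%N then c else d.

Lemma partwise_map {T T' : Type} (f : T -> T') a b c d i :
  f (partwise a b c d i) = partwise (f a) (f b) (f c) (f d) i.
Proof. by rewrite /partwise; case: ifP; case: ifP. Qed.

Lemma partwise_map2 {T1 T2 T' : Type} (f : T1 -> T2 -> T') a b c d a' b' c' d' i :
  f (partwise a b c d i) (partwise a' b' c' d' i)
  = partwise (f a a') (f b b') (f c c') (f d d') i.
Proof. by rewrite /partwise; case: ifP; case: ifP. Qed.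

Lemma M_adjC (u v : 'I_(n + m)) : M_adj n m s t u v = M_adj n m s t v u.
Proof. by rewrite /M_adj orbC. Qed.

Lemma M_adj_partwise (i j : 'I_(n + m)) :
  M_adj n m s t i j =
  partwise (partwise false false true false j) (partwise false false true true j)
           (partwise true true false false j) (partwise false true false false j) i.
Proof.
rewrite /M_adj /M_adjXY /partwise.
case: (ltnP i n) => iX; case: (ltnP j n) => jX /=.
all: rewrite ?andbF ?andbT ?orbF ?if_same //=.
- by case: (ltnP i s); rewrite ?orbT ?orbF //; case: ifP.
- by case: (ltnP j s); rewrite ?orbT ?orbF //; case: ifP.
Qed.

Lemma sum_partwise (V : nmodType) (a b c d : V) : (s <= n)%N -> (t <= m)%N ->
  \sum_(i < n + m) partwise a b c d i = a *+ s + b *+ (n - s) + c *+ (m - t) + d *+ t.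
Proof.
move=> sn tm; rewrite -(big_mkord xpredT).
rewrite (big_cat_nat (leq0n s)) ?(leq_trans sn) ?leq_addr //=.
rewrite (big_cat_nat sn) ?leq_addr //=.
rewrite (big_cat_nat (leq_addr (m - t) n)) ?leq_add2l ?leq_subr //=.
have const_on x lo hi : (forall i, (lo <= i < hi)%N -> partwise a b c d i = x) ->
    \sum_(lo <= i < hi) partwise a b c d i = x *+ (hi - lo) by exact: sum_nat_const_on.
rewrite (const_on a) 1?(const_on b) 1?(const_on c) 1?(const_on d).
- by rewrite subn0 addKn subnDl subKn // !addrA.
all: move=> i /andP[lo hi]; rewrite /partwise; do !case: ifP => ? //; exfalso; lia.
Qed.
End Parts.

Section Quotient.
Variable R : realType.
Variables n m s t : nat.
Hypotheses (sn : (s <= n)%N) (tm : (t <= m)%N).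

Lemma colsum_partwise (a b c d : R) (j : 'I_(n + m)) :
  \sum_(i < n + m) partwise n m s t a b c d i * (M_adj n m s t i j)%:R =
  partwise n m s t (c *+ (m - t)) (c *+ (m - t) + d *+ t)
                   (a *+ s + b *+ (n - s)) (b *+ (n - s)) j.
Proof.
under eq_bigr => i _ do
  rewrite M_adj_partwise (partwise_map _ _ _ _ (fun b : bool => b%:R : R)) partwise_map2.
rewrite sum_partwise // /partwise.
by case: ifP; case: ifP => _ _; rewrite /= ?mulr0 ?mulr1 ?mul0rn ?add0r ?addr0.
Qed.

Lemma partwise_mulmx_Q (a b c d : R) :
  let S := s%:R in let T := t%:R in let U := (m - t)%:R in let W := (n - s)%:R in
  (\row_j partwise n m s t a b c d j) *m M_Q R n m s t =
  \row_j partwise n m s t (a * U + c * U) (b * (U + T) + c * U + d * T)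
                          (c * (S + W) + a * S + b * W) (d * W + b * W) j.
Proof.
move=> S T U W; apply/rowP => j.
rewrite /M_Q mulmxDr /M_D mul_mx_diag !mxE.
have -> : \sum_v M_A R n m s t j v =
           \sum_(v < n + m) partwise n m s t 1 1 1 1 v * (M_adj n m s t v j)%:R.
  by apply: eq_bigr => v _; rewrite mxE M_adjC /partwise !if_same mul1r.
have -> : \sum_v (\row_i partwise n m s t a b c d i) 0 v * M_A R n m s t v j =
           \sum_(v < n + m) partwise n m s t a b c d v * (M_adj n m s t v j)%:R.
  by apply: eq_bigr => v _; rewrite !mxE.
rewrite !colsum_partwise !partwise_map2 /partwise.
by case: ifP; case: ifP => _ _; rewrite !mulr_natr; ring.
Qed.

Lemma M_Q_ge0 i j : 0 <= M_Q R n m s t i j.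
Proof.
rewrite !mxE addr_ge0 ?ler0n // mulrn_wge0 // sumr_ge0 // => v _.
by rewrite mxE ler0n.
Qed.
End Quotient.

(* Collatz-Wielandt: compare the coordinates of [v Q = l v] and [x Q = c x]
   at an index maximising [|v_i| / x_i]. *)
Lemma eigenvalue_le_pos_eigenrow (R : realFieldType) N (Q : 'M[R]_N) (x : 'rV_N) c l :
  (forall i j, 0 <= Q i j) -> (forall i, 0 < x 0 i) -> x *m Q = c *: x ->
  eigenvalue Q l -> l <= c.
Proof.
move=> Q_ge0 x_gt0 xQ /eigenvalueP[v vQ /rV0Pn[j0 vj0]].
pose F i := `|v 0 i| / x 0 i.
have [j _ Fj_max] := @arg_maxP _ R 'I_N j0 xpredT F isT.
have v_le i : `|v 0 i| <= F j * x 0 i by rewrite -ler_pdivrMr //; exact: Fj_max.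
have Fj_gt0 : 0 < F j.
  by apply: lt_le_trans (Fj_max j0 isT); rewrite divr_gt0 ?normr_gt0.
have vj : `|v 0 j| = F j * x 0 j by rewrite divfK ?gt_eqF.
have : `|l| * `|v 0 j| <= c * `|v 0 j|.
  have /rowP/(_ j) := vQ; have /rowP/(_ j) := xQ; rewrite !mxE => xQj vQj.
  rewrite -normrM -vQj vj mulrCA -xQj mulr_sumr.
  apply: le_trans (ler_norm_sum _ _ _) _; apply: ler_sum => i _.
  by rewrite normrM (ger0_norm (Q_ge0 i j)) mulrA ler_wpM2r.
have vj_gt0 : 0 < `|v 0 j| by rewrite vj mulr_gt0.
by rewrite ler_pM2r // => /(le_trans (ler_norm l)).
Qed.

Lemma largest_eigenvalue_eq (R : realType) N (A : 'M[R]_N) rho :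
  eigenvalue A rho -> (forall l, eigenvalue A l -> l <= rho) ->
  largest_eigenvalue R N A = rho.
Proof.
move=> A_rho rho_max; apply/le_anti/andP; split.
- by apply: ge_sup; [exists rho | move=> l /rho_max].
- by apply: ub_le_sup => //; exists rho => l /rho_max.
Qed.

Section QuotientCharPoly.
Variable R : rcfType.
Implicit Types N S T x : R.

(* With [N = n], [S = s], [T = t] and [m = n - 1] (so [U = |Y1|], [W = |X2|]),
   [charq x] is [det (x - B)] for the 4x4 quotient matrix [B] of the partition
   {X1, X2, Y1, Y2}, written through the determinants of its 2x2 principal
   blocks on {X1, Y1} (inlined) and on {X2, Y2} ([charq_X2Y2]). *)
Definition charq_X2Y2 N S T x := (x - (N - 1)) * (x - (N - S)) - T * (N - S).

Definition charq N S T x :=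
  let U := N - 1 - T in let W := N - S in
  ((x - N) * (x - U) - S * U) * charq_X2Y2 N S T x - U * W * (x - U) * (x - W).

Lemma ivt_horner (f : R -> R) (p : {poly R}) a b :
  f =1 horner p -> a <= b -> f a <= 0 <= f b -> exists2 x, a <= x <= b & f x = 0.
Proof.
move=> fp ab fab; have [|x xab /rootP px] := poly_ivt ab (p := p).
  by rewrite -!fp.
by exists x; rewrite // fp.
Qed.

Lemma charq_X2Y2_ivt N S T a b : a <= b -> charq_X2Y2 N S T a <= 0 <= charq_X2Y2 N S T b ->
  exists2 x, a <= x <= b & charq_X2Y2 N S T x = 0.
Proof.
apply: (@ivt_horner _ (('X - (N - 1)%:P) * ('X - (N - S)%:P) - (T * (N - S))%:P)).
by move=> x; rewrite /charq_X2Y2 !hornerE.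
Qed.

Lemma charq_ivt N S T a b : a <= b -> charq N S T a <= 0 <= charq N S T b ->
  exists2 x, a <= x <= b & charq N S T x = 0.
Proof.
pose U := N - 1 - T; pose W := N - S.
apply: (@ivt_horner _ ((('X - N%:P) * ('X - U%:P) - (S * U)%:P)
  * (('X - (N - 1)%:P) * ('X - W%:P) - (T * W)%:P)
  - (U * W)%:P * ('X - U%:P) * ('X - W%:P))).
by move=> x; rewrite /charq /charq_X2Y2 !hornerE.
Qed.

Lemma charq_swap N S T x :
  charq N T S x = charq N S T x + (T - S) * x * (x - (2 * N - 1)).
Proof. by rewrite /charq /charq_X2Y2; ring. Qed.

Lemma charq_shift N S T x :
  charq N (S + 1) (T - 1) x =
  charq N S T x - x * ((2 * (S - T) + 1) * x - (S - T) * (2 * N - 1)).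
Proof. by rewrite /charq /charq_X2Y2; ring. Qed.

Lemma charq_2N1 N S T : charq N S T (2 * N - 1) = S * T * (2 * N - 1) ^+ 2.
Proof. by rewrite /charq /charq_X2Y2; ring. Qed.

Section PerronRoot.
Variables N S T : R.

Lemma charq_X2Y2_large_root : 1 <= S -> 1 <= T -> S <= N - 1 -> T <= N - 2 ->
  exists lh, [/\ N - 1 < lh, lh <= 2 * N - 1 & charq_X2Y2 N S T lh = 0].
Proof.
move=> S_ge1 T_ge1 S_le T_le.
have X2Y2_low : charq_X2Y2 N S T (N - 1) = - T * (N - S) by rewrite /charq_X2Y2; ring.
have X2Y2_high : charq_X2Y2 N S T (2 * N - 1) = N * (N - 1 + S) - T * (N - S).
  by rewrite /charq_X2Y2; ring.
have X2Y2_sign : charq_X2Y2 N S T (N - 1) <= 0 <= charq_X2Y2 N S T (2 * N - 1).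
  have TW_ge0 : 0 <= T * (N - S) by apply: mulr_ge0; lra.
  have TW_le : 0 <= (N - T) * (N - S) by apply: mulr_ge0; lra.
  have NS_ge0 : 0 <= N * (2 * S - 1) by apply: mulr_ge0; lra.
  by rewrite X2Y2_low X2Y2_high; apply/andP; split; nra.
have ends : N - 1 <= 2 * N - 1 by lra.
have [lh /andP[lh_ge lh_le] X2Y2_lh] := charq_X2Y2_ivt ends X2Y2_sign.
exists lh; split => //; rewrite lt_neqAle lh_ge andbT.
by apply/eqP => lh_eq; move: X2Y2_lh; rewrite -lh_eq X2Y2_low; nra.
Qed.

Lemma charq_perron_root : 1 <= S -> 1 <= T -> S <= N - 1 -> T <= N - 2 ->
  exists rho, [/\ N < rho, rho < 2 * N - 1, charq N S T rho = 0 & 0 < charq_X2Y2 N S T rho].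
Proof.
move=> S_ge1 T_ge1 S_le T_le.
have [lh [lh_gt lh_le X2Y2_lh]] := charq_X2Y2_large_root S_ge1 T_ge1 S_le T_le.
(* At [max N lh] the polynomial [charq] is negative: at [lh] its first product
   vanishes, and at [N] it is [- N S U]. *)
have [L [N_le_L lh_le_L L_le charq_L]] :
    exists L, [/\ N <= L, lh <= L, L <= 2 * N - 1 & charq N S T L < 0].
  have [N_le_lh | lh_lt_N] := leP N lh; [exists lh | exists N]; split; try lra.
  - have -> : charq N S T lh = - ((N - 1 - T) * (N - S) * (lh - (N - 1 - T)) * (lh - (N - S))).
      by rewrite /charq X2Y2_lh; ring.
    by rewrite oppr_lt0; do !apply: mulr_gt0; lra.
  - have -> : charq N S T N = - (N * S * (N - 1 - T)) by rewrite /charq /charq_X2Y2; ring.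
    by rewrite oppr_lt0; do !apply: mulr_gt0; lra.
have charq_high : 0 < charq N S T (2 * N - 1).
  by rewrite charq_2N1 !mulr_gt0 ?exprn_gt0 //; lra.
have charq_sign : charq N S T L <= 0 <= charq N S T (2 * N - 1) by rewrite !ltW.
have [rho /andP[rho_ge rho_le] charq_rho] := charq_ivt L_le charq_sign.
have L_lt_rho : L < rho.
  by rewrite lt_neqAle rho_ge andbT; apply: contra_ltN charq_L => /eqP->; rewrite charq_rho.
have rho_lt : rho < 2 * N - 1.
  by rewrite lt_neqAle rho_le andbT; apply: contra_ltN charq_high => /eqP<-; rewrite charq_rho.
exists rho; split => //; first lra.
have -> : charq_X2Y2 N S T rho = (rho - lh) * (rho + lh - (N - 1) - (N - S)).
  by rewrite -[LHS]subr0 -X2Y2_lh /charq_X2Y2; ring.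
by apply: mulr_gt0; lra.
Qed.
End PerronRoot.
End QuotientCharPoly.

Definition admissible (n s t : nat) := [&& 0 < s, s < n, 0 < t & t + 2 <= n]%N.

Section PerronVector.
Variable R : realType.
Variables n s t : nat.

Lemma admissible_bounds : admissible n s t ->
  [/\ 1 <= s%:R :> R, 1 <= t%:R :> R, s%:R <= n%:R - 1 :> R & t%:R <= n%:R - 2 :> R].
Proof.
case/and4P=> s_gt0 s_lt t_gt0 t_le.
by rewrite !ler1n !lerBrDr natr1 -(natrD _ t 2) !ler_nat.
Qed.

(* The quotient eigen-system solved for [a] and [d] in terms of [c] and [b];
   its remaining equation holds exactly when [charq x = 0]. *)
Definition perron_row (x : R) : 'rV[R]_(n + (n - 1)) :=
  let N := n%:R in let S := s%:R in let T := t%:R in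
  let U := N - 1 - T in let W := N - S in let h := charq_X2Y2 N S T x in
  \row_j partwise n (n - 1) s t
    (U * h) (U * (x - U) * (x - W)) ((x - U) * h) (W * U * (x - U)) j.

Lemma perron_row_eigen x : (s <= n)%N -> (t < n)%N -> charq n%:R s%:R t%:R x = 0 ->
  perron_row x *m M_Q R n (n - 1) s t = x *: perron_row x.
Proof.
move=> sn tn charq_x.
rewrite partwise_mulmx_Q //; last by lia.
have -> : ((n - 1 - t)%:R : R) = n%:R - 1 - t%:R by rewrite !natrB //; lia.
rewrite natrB //; apply/rowP => j; rewrite !mxE (partwise_map _ _ _ _ ( *%R x)).
congr partwise; rewrite /charq_X2Y2; [ring | ring | | ring].
by rewrite -[RHS]subr0 -charq_x /charq /charq_X2Y2; ring.
Qed.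

Lemma perron_row_gt0 x : admissible n s t -> n%:R < x -> 0 < charq_X2Y2 n%:R s%:R t%:R x ->
  forall i, 0 < perron_row x 0 i.
Proof.
move=> /admissible_bounds[S_ge1 T_ge1 S_le T_le] x_gt h_gt0 i.
by rewrite mxE /partwise; do !case: ifP => _; do ?apply: mulr_gt0; lra.
Qed.

Lemma perron_row_neq0 x : admissible n s t -> n%:R < x -> perron_row x != 0.
Proof.
move=> adm x_gt; have /and4P[_ s_lt _ _] := adm.
have /admissible_bounds[S_ge1 T_ge1 S_le T_le] := adm.
(* the entry at the first vertex of X2 does not involve [charq_X2Y2] *)
apply/eqP => /rowP/(_ (Ordinal (ltn_addr (n - 1) s_lt))); rewrite !mxE /partwise /= s_lt ltnn.
by apply/eqP; rewrite gt_eqF //; do ?apply: mulr_gt0; lra.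
Qed.

Lemma qM_perron_root : admissible n s t ->
  let q := qM R n (n - 1) s t in
  [/\ n%:R < q, q < 2 * n%:R - 1, charq n%:R s%:R t%:R q = 0 &
      forall l, eigenvalue (M_Q R n (n - 1) s t) l -> l <= q].
Proof.
move=> adm; have [S_ge1 T_ge1 S_le T_le] := admissible_bounds adm.
have [s_le t_lt] : (s <= n /\ t < n)%N by case/and4P: adm; lia.
have [rho [rho_gt rho_lt charq_rho X2Y2_rho]] := charq_perron_root S_ge1 T_ge1 S_le T_le.
have rhoQ := perron_row_eigen s_le t_lt charq_rho.
have rho_max l : eigenvalue (M_Q R n (n - 1) s t) l -> l <= rho.
  by apply: eigenvalue_le_pos_eigenrow rhoQ; [exact: M_Q_ge0 | exact: perron_row_gt0].
have rho_eig : eigenvalue (M_Q R n (n - 1) s t) rho.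
  by apply/eigenvalueP; exists (perron_row rho); last exact: perron_row_neq0.
by rewrite /qM (largest_eigenvalue_eq rho_eig rho_max).
Qed.

Lemma charq_root_le_qM x : admissible n s t -> n%:R < x -> charq n%:R s%:R t%:R x = 0 ->
  x <= qM R n (n - 1) s t.
Proof.
move=> adm x_gt charq_x; have [_ _ _ qM_max] := qM_perron_root adm; apply: qM_max.
have [s_le t_lt] : (s <= n /\ t < n)%N by case/and4P: adm; lia.
apply/eigenvalueP; exists (perron_row x); last exact: perron_row_neq0.
exact: perron_row_eigen s_le t_lt charq_x.
Qed.
End PerronVector.

Lemma qM_lt_of_charq_lt0 (R : realType) n s1 t1 s2 t2 :
  admissible n s1 t1 -> admissible n s2 t2 ->
  (forall x : R, n%:R < x < 2 * n%:R - 1 ->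
     charq n%:R s1%:R t1%:R x = 0 -> charq n%:R s2%:R t2%:R x < 0) ->
  qM R n (n - 1) s1 t1 < qM R n (n - 1) s2 t2.
Proof.
move=> adm1 adm2 sep; set q1 := qM R n (n - 1) s1 t1.
have [q1_gt q1_lt charq_q1 _] := qM_perron_root R adm1.
have charq2_q1 : charq n%:R s2%:R t2%:R q1 < 0 by apply: sep => //; apply/andP.
have charq2_sign : charq n%:R s2%:R t2%:R q1 <= 0 <= charq n%:R s2%:R t2%:R (2 * n%:R - 1 : R).
  by rewrite (ltW charq2_q1) charq_2N1 mulr_ge0 ?sqr_ge0 ?mulr_ge0.
have [x /andP[x_ge _] charq_x] := charq_ivt (ltW q1_lt) charq2_sign.
have q1_lt_x : q1 < x.
  by rewrite lt_neqAle x_ge andbT; apply: contra_ltN charq2_q1 => /eqP->; rewrite charq_x.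
have x_gt : n%:R < x by apply: lt_trans q1_lt_x.
exact: lt_le_trans q1_lt_x (charq_root_le_qM adm2 x_gt charq_x).
Qed.

Theorem lemma5p2 (R : realType) :
  (forall p k n : nat, (p + 1 <= k)%N -> (2 * k - p + 2 <= n)%N ->
     qM R n (n - 1) (k - p) (n - k - 1) < qM R n (n - 1) (n - k - 1) (k - p))
  /\
  (forall p k n : nat, (p + 2 <= k)%N -> (2 * k - p + 2 <= n)%N ->
     qM R n (n - 1) (n - k - 1) (k - p) < qM R n (n - 1) (n - k) (k - p - 1)).
Proof.
split=> p k n k_ge n_ge; apply: qM_lt_of_charq_lt0; try (rewrite /admissible; lia).
all: move=> x /andP[x_gt x_lt] charq_x.
all: have gap : (k - p)%:R + 1 <= (n - k - 1)%:R :> R by rewrite natr1 ler_nat; lia.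
all: have n_ge0 := ler0n R n.
- have gap_x : 0 < ((n - k - 1)%:R - (k - p)%:R) * x by apply: mulr_gt0; lra.
  by rewrite charq_swap charq_x add0r; nra.
- have -> : (n - k)%:R = (n - k - 1)%:R + 1 :> R by rewrite natr1; congr _%:R; lia.
  have -> : (k - p - 1)%:R = (k - p)%:R - 1 :> R by rewrite natrB //; lia.
  have gap_x : 0 <= ((n - k - 1)%:R - (k - p)%:R) * (x - n%:R) by apply: mulr_ge0; lra.
  by rewrite charq_shift charq_x sub0r oppr_lt0; apply: mulr_gt0; nra.
Qed.
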